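(* Let $[a,b]\subset\mathbb{R}$ be a compact interval, let $m\geq1$, $r\geq2$, $n\geq0$ be integers, let $0<\alpha\leq1$, and let $\varepsilon_0>0$. For each $\varepsilon\in[0,\varepsilon_0)$ let $A_{r-j}(\cdot,\varepsilon)\in(C^{n,\alpha})^{m\times m}$ for $j=1,\dots,r$, and let $L(\varepsilon):(C^{n+r,\alpha})^{m}\to(C^{n,\alpha})^{m}$ be the continuous linear operator $L(\varepsilon)y:=y^{(r)}+\sum_{j=1}^{r}A_{r-j}(\cdot,\varepsilon)y^{(r-j)}$. Then the following three conditions are equivalent: (I) $A_{r-j}(\cdot,\varepsilon)\to A_{r-j}(\cdot,0)$ in $(C^{n,\alpha})^{m\times m}$ as $\varepsilon\to0+$ for each $j\in\{1,\dots,r\}$; (c1) $\|L(\varepsilon)-L(0)\|\to0$ as $\varepsilon\to0+$, where $\|\cdot\|$ is the operator norm for operators $(C^{n+r,\alpha})^{m}\to(C^{n,\alpha})^{m}$; (c2) $L(\varepsilon)y\to L(0)y$ in $(C^{n,\alpha})^{m}$ as $\varepsilon\to0+$ for every $y\in(C^{n+r,\alpha})^{m}$.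
   Context: $C^{n,\alpha}$ denotes the complex Hölder space of all $n$ times continuously differentiable functions $x:[a,b]\to\mathbb{C}$ with $\|x\|'_{n,\alpha}:=\sup_{a\leq t_1<t_2\leq b}|x^{(n)}(t_2)-x^{(n)}(t_1)|/|t_2-t_1|^{\alpha}<\infty$, normed by $\|x\|_{n,\alpha}:=\sum_{j=0}^{n}\max_{[a,b]}|x^{(j)}|+\|x\|'_{n,\alpha}$. $(C^{n,\alpha})^{m}$ and $(C^{n,\alpha})^{m\times m}$ are the spaces of $m$-column vector-valued and $m\times m$ matrix-valued functions with entries in $C^{n,\alpha}$, normed by the sum of the entries' norms. *)

From HB Require Import structures.
From mathcomp Require Import all_boot all_order all_algebra.
From mathcomp Require Import all_classical all_reals.
From mathcomp Require Import exp.
From mathcomp Require Import complex.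

Set Implicit Arguments.
Unset Strict Implicit.
Unset Printing Implicit Defensive.

Import Order.TTheory GRing.Theory Num.Theory.
Local Open Scope ring_scope.
Local Open Scope classical_set_scope.

Section Holder.
Variable R : realType.
Local Notation C := R[i].

Definition cabs (z : C) : R := ComplexField.Normc.normc z.

Variables a b : R.

Definition has_deriv_on (f g : R -> C) : Prop :=
  forall t, a <= t <= b -> forall e : R, 0 < e -> exists2 d : R, 0 < d &
    forall s, a <= s <= b -> 0 < `|s - t| < d ->
      cabs ((f s - f t) / ((s - t)%:C)%C - g t) < e.

Definition cont_on (f : R -> C) : Prop :=
  forall t, a <= t <= b -> forall e : R, 0 < e -> exists2 d : R, 0 < d &
    forall s, a <= s <= b -> `|s - t| < d -> cabs (f s - f t) < e.

(* a chosen derivative within [a,b] (0 if f is not differentiable there);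
   for a < b derivatives within [a,b] are unique on [a,b]. *)
Definition dw (f : R -> C) : R -> C :=
  match pselect (exists g, has_deriv_on f g) with
  | left H => proj1_sig (cid H)
  | right _ => fun _ => 0
  end.

Definition dern (j : nat) (f : R -> C) : R -> C := iter j dw f.

Definition Cn (n : nat) (f : R -> C) : Prop :=
  (forall j, (j < n)%N -> has_deriv_on (dern j f) (dern j.+1 f)) /\
  (forall j, (j <= n)%N -> cont_on (dern j f)).

Definition holder_quot (n : nat) (alpha : R) (f : R -> C) : set R :=
  [set q | exists t1 t2, [/\ a <= t1, t1 < t2, t2 <= b &
       q = cabs (dern n f t2 - dern n f t1) / (t2 - t1) `^ alpha]].

Definition holder_semi (n : nat) (alpha : R) (f : R -> C) : R :=
  sup (holder_quot n alpha f).

Definition max_der (j : nat) (f : R -> C) : R :=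
  sup [set q | exists2 t, a <= t <= b & q = cabs (dern j f t)].

Definition holder_norm (n : nat) (alpha : R) (f : R -> C) : R :=
  \sum_(j < n.+1) max_der j f + holder_semi n alpha f.

Definition in_holder (n : nat) (alpha : R) (f : R -> C) : Prop :=
  Cn n f /\ has_ubound (holder_quot n alpha f).

Definition vin_holder m (n : nat) (alpha : R) (y : R -> 'cV[C]_m) : Prop :=
  forall i : 'I_m, in_holder n alpha (fun t => y t i 0).

Definition vholder_norm m (n : nat) (alpha : R) (y : R -> 'cV[C]_m) : R :=
  \sum_(i < m) holder_norm n alpha (fun t => y t i 0).

Definition min_holder m (n : nat) (alpha : R) (A : R -> 'M[C]_m) : Prop :=
  forall i j : 'I_m, in_holder n alpha (fun t => A t i j).

Definition mholder_norm m (n : nat) (alpha : R) (A : R -> 'M[C]_m) : R :=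
  \sum_(i < m) \sum_(j < m) holder_norm n alpha (fun t => A t i j).

Definition vder m (k : nat) (y : R -> 'cV[C]_m) : R -> 'cV[C]_m :=
  fun t => \col_i dern k (fun s => y s i 0) t.

(* L y := y^(r) + sum_{j=1}^r A_{r-j} y^(r-j);
   here Ak k = A_k for k < r, i.e. the term j corresponds to k = r - j. *)
Definition Lop m (r : nat) (Ak : 'I_r -> R -> 'M[C]_m) (y : R -> 'cV[C]_m)
  : R -> 'cV[C]_m :=
  fun t => vder r y t + \sum_(k < r) (Ak k t *m vder k y t).

Definition opnorm m (n r : nat) (alpha : R)
  (T : (R -> 'cV[C]_m) -> (R -> 'cV[C]_m)) : R :=
  sup [set q | exists y, [/\ vin_holder (n + r) alpha y,
        vholder_norm (n + r) alpha y <= 1 &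
        q = vholder_norm n alpha (T y)]].

End Holder.

From HB Require Import structures.
From mathcomp Require Import all_boot all_order all_algebra.
From mathcomp Require Import all_classical all_reals.
From mathcomp Require Import exp.
From mathcomp Require Import complex.
From mathcomp Require Import ring lra.
Import Order.TTheory GRing.Theory Num.Theory.
Local Open Scope ring_scope.

(* Write L(eps) - L(0) = sum_k (A_k(eps) - A_k(0)) d^k.  Two facts about
   C^{n,alpha} do most of the work: it is a Banach algebra up to a constant,
   and, by the mean value inequality, d^k maps C^{n+r,alpha} boundedly into
   C^{n,alpha} for k <= r.  Hence ||L(eps) - L(0)|| is at most a constant times
   sum_k ||A_k(eps) - A_k(0)||, which gives (I) => (c1); and (c1) => (c2)
   because ||(L(eps) - L(0)) y|| <= (1 + ||y||) ||L(eps) - L(0)||.  For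
   (c2) => (I), apply L(eps) - L(0) to y = (t - a)^p / p! e_j: its i-th
   component is the (i, j) entry of A_p(eps) - A_p(0) plus terms involving only
   the A_k with k < p, so the coefficients converge by induction on p. *)

Section ComplexModulus.
Set Implicit Arguments.
Unset Strict Implicit.
Variable R : realType.
Local Notation C := R[i].

Lemma cabs_ge0 (z : C) : 0 <= cabs z.
Proof. by case: z => x y; exact: sqrtr_ge0. Qed.

Lemma ler_cabsD (x y : C) : cabs (x + y) <= cabs x + cabs y.
Proof. exact: le_normcD. Qed.

Lemma cabsM (x y : C) : cabs (x * y) = cabs x * cabs y.
Proof. exact: ComplexField.Normc.normcM. Qed.

Lemma cabsN (x : C) : cabs (- x) = cabs x.
Proof. exact: normcN. Qed.

Lemma cabs0 : cabs (0 : C) = 0.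
Proof. exact: ComplexField.Normc.normc0. Qed.

Lemma cabsV (x : C) : cabs x^-1 = (cabs x)^-1.
Proof. exact: ComplexField.Normc.normcV. Qed.

Lemma cabs_gt0 (x : C) : x != 0 -> 0 < cabs x.
Proof.
move=> x0; rewrite lt_neqAle cabs_ge0 andbT eq_sym.
by apply: contra x0 => /eqP /ComplexField.Normc.eq0_normc ->.
Qed.

Lemma cabs_real (x : R) : cabs x%:C%C = `|x|.
Proof. by rewrite /cabs /= expr0n /= addr0 sqrtr_sqr. Qed.

Lemma cabs1 : cabs (1 : C) = 1.
Proof. by rewrite cabs_real normr1. Qed.

Lemma cabs_distC (x y : C) : cabs (x - y) = cabs (y - x).
Proof. by rewrite -cabsN opprB. Qed.

Lemma ler_cabs_distD (x y z : C) : cabs (x - z) <= cabs (x - y) + cabs (y - z).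
Proof. by have := ler_cabsD (x - y) (y - z); rewrite addrA subrK. Qed.

Lemma cabs_small_eq0 (z : C) : (forall e : R, 0 < e -> cabs z < e) -> z = 0.
Proof.
move=> small; apply: ComplexField.Normc.eq0_normc; apply/eqP.
rewrite eq_le cabs_ge0 andbT; apply/ler_addgt0Pr => e e0.
by rewrite add0r ltW ?small.
Qed.

End ComplexModulus.

Lemma lt_mul_of_lt_divD1 (R : realFieldType) (k x e : R) :
  0 <= k -> 0 <= x -> x < e / (k + 1) -> k * x < e.
Proof. by move=> k0 x0; rewrite ltr_pdivlMr; [nra | lra]. Qed.

Section Vanishing.
Set Implicit Arguments.
Unset Strict Implicit.
Variables (R : realType) (eps0 : R).

Definition vanishes (F : R -> R) := forall e : R, 0 < e -> exists2 d : R, 0 < d &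
  forall eps, 0 < eps -> eps < d -> eps < eps0 -> F eps < e.

Lemma vanishes_le F G : vanishes F ->
  (forall eps, 0 < eps -> eps < eps0 -> G eps <= F eps) -> vanishes G.
Proof.
move=> vF GF e e0; have [d d0 near] := vF e e0; exists d => // eps eps_gt0 epsd eps_lt0.
exact: le_lt_trans (GF _ eps_gt0 eps_lt0) (near _ eps_gt0 epsd eps_lt0).
Qed.

Lemma vanishes0 : vanishes (fun=> 0).
Proof. by move=> e e0; exists 1. Qed.

Lemma vanishesD F G : vanishes F -> vanishes G -> vanishes (fun eps => F eps + G eps).
Proof.
move=> vF vG e e0; have e2 : 0 < e / 2 by lra.
have [d1 d10 near1] := vF _ e2; have [d2 d20 near2] := vG _ e2.
exists (Num.min d1 d2) => [|eps eps_gt0]; first by rewrite lt_min d10.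
rewrite lt_min => /andP [epsd1 epsd2] eps_lt0.
by have := near1 _ eps_gt0 epsd1 eps_lt0; have := near2 _ eps_gt0 epsd2 eps_lt0; lra.
Qed.

Lemma vanishesZ (c : R) F : 0 <= c -> vanishes F -> vanishes (fun eps => c * F eps).
Proof.
move=> c0 vF e e0; have ec : 0 < e / (c + 1) by rewrite divr_gt0 //; lra.
have [d d0 near] := vF _ ec; exists d => // eps eps_gt0 epsd eps_lt0.
have [F0|F0] := leP 0 (F eps); first exact: lt_mul_of_lt_divD1 c0 F0 (near _ eps_gt0 epsd eps_lt0).
by rewrite (le_lt_trans _ e0) // mulr_ge0_le0 // ltW.
Qed.

Lemma vanishes_sum (I : Type) (s : seq I) (P : pred I) (F : I -> R -> R) :
  (forall i, P i -> vanishes (F i)) -> vanishes (fun eps => \sum_(i <- s | P i) F i eps).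
Proof.
move=> vF; elim: s => [|i s IH].
  by under eq_fun do rewrite big_nil; exact: vanishes0.
under eq_fun do rewrite big_cons; case Pi: (P i) => //; exact: vanishesD (vF i Pi) IH.
Qed.

End Vanishing.

(** * Derivatives within [a, b] *)

Section DerivativeWithin.
Set Implicit Arguments.
Unset Strict Implicit.
Variables (R : realType) (a b : R).
Hypothesis hab : a < b.
Local Notation C := R[i].
Local Notation D := (has_deriv_on a b).

Definition eqon (f g : R -> C) := forall t, a <= t <= b -> f t = g t.

Lemma eqon_sym f g : eqon f g -> eqon g f.
Proof. by move=> fg t ht; rewrite fg. Qed.

Lemma eqon_trans f g h : eqon f g -> eqon g h -> eqon f h.
Proof. by move=> fg gh t ht; rewrite fg // gh. Qed.

Definition lim_within (t : R) (F : R -> C) (l : C) := forall e : R, 0 < e ->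
  exists2 d : R, 0 < d & forall s, a <= s <= b -> 0 < `|s - t| < d -> cabs (F s - l) < e.

Definition dquot (f : R -> C) (t s : R) : C := (f s - f t) / (s - t)%:C%C.

Lemma exists_close_point t : a <= t <= b -> forall d : R, 0 < d ->
  exists2 s : R, a <= s <= b & 0 < `|s - t| < d.
Proof.
move=> /andP [hat htb] d d0; have [tb|bt] := ltP t b.
  have [m0 md mb] : [/\ 0 < Num.min (d / 2) (b - t),
      Num.min (d / 2) (b - t) <= d / 2 & Num.min (d / 2) (b - t) <= b - t].
    by rewrite lt_min !ge_min !lexx orbT; split => //; apply/andP; split; lra.
  exists (t + Num.min (d / 2) (b - t)); first by apply/andP; split; lra.
  by rewrite addrAC subrr add0r gtr0_norm //; apply/andP; split; lra.
have ta : a < t := lt_le_trans hab bt.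
have [m0 md ma] : [/\ 0 < Num.min (d / 2) (t - a),
    Num.min (d / 2) (t - a) <= d / 2 & Num.min (d / 2) (t - a) <= t - a].
  by rewrite lt_min !ge_min !lexx orbT; split => //; apply/andP; split; lra.
exists (t - Num.min (d / 2) (t - a)); first by apply/andP; split; lra.
by rewrite addrAC subrr add0r normrN gtr0_norm //; apply/andP; split; lra.
Qed.

Lemma lim_within_unique t F l1 l2 : a <= t <= b ->
  lim_within t F l1 -> lim_within t F l2 -> l1 = l2.
Proof.
move=> ht F1 F2; apply/eqP; rewrite -subr_eq0; apply/eqP/cabs_small_eq0 => e e0.
have e2 : 0 < e / 2 by lra.
have [d1 d10 near1] := F1 _ e2; have [d2 d20 near2] := F2 _ e2.
have dm : 0 < Num.min d1 d2 by rewrite lt_min d10.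
have [s hs /andP [st0]] := exists_close_point ht dm.
rewrite lt_min => /andP [sd1 sd2].
have := near1 s hs; rewrite st0 sd1 => /(_ isT).
have := near2 s hs; rewrite st0 sd2 => /(_ isT).
have := ler_cabs_distD l1 (F s) l2; rewrite (cabs_distC l1 (F s)); lra.
Qed.

Lemma lim_within_ext t F G l : (forall s, s != t -> F s = G s) ->
  lim_within t F l -> lim_within t G l.
Proof.
move=> FG limF e e0; have [d d0 near] := limF e e0; exists d => // s hs /andP [st0 sd].
rewrite -FG; first by apply: near; rewrite // st0.
by rewrite -subr_eq0 -normr_gt0.
Qed.

Lemma lim_within_cst t (c : C) : lim_within t (fun=> c) c.
Proof. by move=> e e0; exists 1 => // s _ _; rewrite subrr cabs0. Qed.

Lemma lim_within_shift t : lim_within t (fun s => (s - t)%:C%C) 0.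
Proof. by move=> e e0; exists e => // s _ /andP [_]; rewrite subr0 cabs_real. Qed.

Lemma lim_within2 t F G l l' : lim_within t F l -> lim_within t G l' ->
  forall e : R, 0 < e -> exists2 d : R, 0 < d & forall s, a <= s <= b ->
    0 < `|s - t| < d -> cabs (F s - l) < e /\ cabs (G s - l') < e.
Proof.
move=> limF limG e e0; have [d1 d10 nearF] := limF e e0; have [d2 d20 nearG] := limG e e0.
exists (Num.min d1 d2); first by rewrite lt_min d10.
move=> s hs /andP [st0]; rewrite lt_min => /andP [sd1 sd2].
by rewrite nearF ?nearG ?st0.
Qed.

Lemma lim_withinD t F G l l' : lim_within t F l -> lim_within t G l' ->
  lim_within t (fun s => F s + G s) (l + l').
Proof.
move=> limF limG e e0; have e2 : 0 < e / 2 by lra.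
have [d d0 near] := lim_within2 limF limG e2.
exists d => // s hs hsd; have [nF nG] := near s hs hsd.
rewrite opprD addrACA; apply: le_lt_trans (ler_cabsD _ _) _; lra.
Qed.

Lemma lim_withinM t F G l l' : lim_within t F l -> lim_within t G l' ->
  lim_within t (fun s => F s * G s) (l * l').
Proof.
move=> limF limG e e0.
have [l0 l'0] := (cabs_ge0 l, cabs_ge0 l').
pose e' := Num.min 1 (e / (cabs l + cabs l' + 1)).
have e'0 : 0 < e' by rewrite lt_min ltr01 divr_gt0 //; lra.
have e'1 : e' <= 1 by rewrite ge_min lexx.
have e'e : e' * (cabs l + cabs l' + 1) <= e.
  by rewrite -ler_pdivlMr ?ge_min ?lexx ?orbT //; lra.
have [d d0 near] := lim_within2 limF limG e'0.
exists d => // s hs hsd; have [nF nG] := near s hs hsd.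
have -> : F s * G s - l * l' = (F s - l) * (G s - l') + (F s - l) * l' + l * (G s - l').
  by ring.
have b1 : cabs (F s - l) * cabs (G s - l') < e'.
  by rewrite (le_lt_trans _ nF) // ler_piMr ?cabs_ge0 // (le_trans (ltW nG)).
have b2 := ler_wpM2r l'0 (ltW nF); have b3 := ler_wpM2l l0 (ltW nG).
have := ler_cabsD ((F s - l) * (G s - l') + (F s - l) * l') (l * (G s - l')).
have := ler_cabsD ((F s - l) * (G s - l')) ((F s - l) * l').
rewrite !mulrDr mulr1 in e'e; rewrite !cabsM; lra.
Qed.

Lemma cont_on_of_lim_within f :
  (forall t, a <= t <= b -> lim_within t f (f t)) -> cont_on a b f.
Proof.
move=> limf t ht e e0; have [d d0 near] := limf t ht e e0; exists d => // s hs sd.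
have [->|st] := eqVneq s t; first by rewrite subrr cabs0.
by apply: near; rewrite // normr_gt0 subr_eq0 st.
Qed.

Lemma deriv_lim_within f g t : D f g -> a <= t <= b -> lim_within t f (f t).
Proof.
move=> df ht; have := lim_withinD (lim_within_cst t (f t))
  (lim_withinM (df t ht) (lim_within_shift t)).
rewrite mulr0 addr0; apply: lim_within_ext => s st.
have st' : (s - t)%:C%C != 0 :> C by rewrite fmorph_eq0 subr_eq0.
by rewrite /dquot divfK // addrC subrK.
Qed.

Lemma deriv_cont f g : D f g -> cont_on a b f.
Proof. by move=> df; apply: cont_on_of_lim_within => t; exact: deriv_lim_within df. Qed.

Lemma deriv_unique f g1 g2 : D f g1 -> D f g2 -> eqon g1 g2.
Proof. by move=> d1 d2 t ht; exact: lim_within_unique (d1 t ht) (d2 t ht). Qed.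

Lemma deriv_eqon f f' g g' : eqon f f' -> eqon g g' -> D f g -> D f' g'.
Proof.
move=> ff' gg' df t ht e e0; have [d d0 near] := df t ht e e0; exists d => // s hs sd.
by rewrite -ff' // -ff' // -gg' //; apply: near.
Qed.

Lemma dw_spec f g : D f g -> eqon (dw a b f) g.
Proof.
move=> df; rewrite /dw; case: pselect => [ex|]; last by case; exists g.
by case: (cid ex) => g' dg' /=; exact: deriv_unique dg' df.
Qed.

Lemma dw_deriv f g : D f g -> D f (dw a b f).
Proof. by move=> df; apply: deriv_eqon (eqon_sym (dw_spec df)) df. Qed.

Lemma dw_eqon f f' : eqon f f' -> eqon (dw a b f) (dw a b f').
Proof.
move=> ff'; have [[g df]|nd] := pselect (exists g, D f g).
  have df' : D f' g by apply: deriv_eqon df.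
  by apply: eqon_trans (dw_spec df) (eqon_sym (dw_spec df')).
have nd' : ~ exists g, D f' g.
  by case=> g df'; apply: nd; exists g; apply: deriv_eqon df' => //; exact: eqon_sym.
by rewrite /dw; do 2 case: pselect => //.
Qed.

Lemma deriv_cst (c : C) : D (fun=> c) (fun=> 0).
Proof.
move=> t _; apply: lim_within_ext (lim_within_cst t 0) => s _.
by rewrite /dquot subrr mul0r.
Qed.

Lemma deriv_shift (c : R) : D (fun t => (t - c)%:C%C) (fun=> 1).
Proof.
move=> t _; apply: lim_within_ext (lim_within_cst t 1) => s st.
have st' : (s - t)%:C%C != 0 :> C by rewrite fmorph_eq0 subr_eq0.
by rewrite /dquot -rmorphB opprB addrA subrK divff.
Qed.

Lemma deriv_add f f' g g' : D f f' -> D g g' ->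
  D (fun t => f t + g t) (fun t => f' t + g' t).
Proof.
move=> df dg t ht; apply: lim_within_ext (lim_withinD (df t ht) (dg t ht)) => s _.
by rewrite /dquot -mulrDl opprD addrACA.
Qed.

Lemma deriv_mul f f' g g' : D f f' -> D g g' ->
  D (fun t => f t * g t) (fun t => f' t * g t + f t * g' t).
Proof.
move=> df dg t ht.
have := lim_withinD (lim_withinM (df t ht) (deriv_lim_within dg ht))
  (lim_withinM (lim_within_cst t (f t)) (dg t ht)).
by apply: lim_within_ext => s _; rewrite /dquot; ring.
Qed.

Lemma deriv_scale (c : C) f f' : D f f' -> D (fun t => c * f t) (fun t => c * f' t).
Proof.
move=> df; apply: deriv_eqon (deriv_mul (deriv_cst c) df) => // t _.
by rewrite mul0r add0r.
Qed.

Lemma lipschitz_of_local f (K : R) :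
  (forall t, a <= t <= b -> exists2 d : R, 0 < d & forall s, a <= s <= b ->
     `|s - t| < d -> cabs (f s - f t) <= K * `|s - t|) ->
  forall t1 t2, a <= t1 -> t1 <= t2 -> t2 <= b -> cabs (f t2 - f t1) <= K * (t2 - t1).
Proof.
move=> loc t1 t2 at1 t12 t2b.
(* Continuous induction: the supremum u of the points up to which the bound
   holds is t2. *)
pose S : set R := fun s => t1 <= s <= t2 /\ cabs (f s - f t1) <= K * (s - t1).
have chain x y : S y -> y <= x <= t2 -> cabs (f x - f y) <= K * (x - y) -> S x.
  move=> [/andP [t1y _] Sy] /andP [yx xt2] fxy; split; first by apply/andP; split; lra.
  by have := ler_cabs_distD (f x) (f y) (f t1); lra.
have St1 : S t1 by split; [rewrite lexx | rewrite !subrr cabs0 mulr0].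
have ubS : ubound S t2 by move=> s [/andP []].
have supS : has_sup S by split; [exists t1 | exists t2].
set u := sup S.
have t1u : t1 <= u := sup_upper_bound supS St1.
have ut2 : u <= t2 by apply: ge_sup => //; exists t1.
have [d d0 locu] := loc u (ltac:(apply/andP; split; lra)).
have Su : S u.
  have [s Ss us] := sup_adherent d0 supS; rewrite -/u in us.
  have su : s <= u := sup_upper_bound supS Ss.
  apply: (chain u s) => //; first by apply/andP.
  have /locu : a <= s <= b by case: Ss => /andP [? ?] _; apply/andP; split; lra.
  by rewrite cabs_distC ler0_norm ?opprB; [apply; lra | lra].
have [ut|t2u] := ltP u t2; last first.
  have -> : t2 = u by apply/eqP; rewrite eq_le t2u ut2.
  by case: Su.
set m := Num.min (d / 2) (t2 - u).
have [m0 md mt] : [/\ 0 < m, m <= d / 2 & m <= t2 - u].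
  by rewrite lt_min !ge_min !lexx orbT; split => //; apply/andP; split; lra.
have Sum : S (u + m).
  apply: (chain _ u) => //; first by apply/andP; split; lra.
  have /locu : a <= u + m <= b by apply/andP; split; lra.
  by rewrite [u + m - u]addrC addKr gtr0_norm //; apply; lra.
by have := sup_upper_bound supS Sum; rewrite -/u; lra.
Qed.

Lemma deriv_local_lipschitz f g (B eps : R) : D f g ->
  (forall t, a <= t <= b -> cabs (g t) <= B) -> 0 < eps ->
  forall t, a <= t <= b -> exists2 d : R, 0 < d & forall s, a <= s <= b ->
    `|s - t| < d -> cabs (f s - f t) <= (B + eps) * `|s - t|.
Proof.
move=> df gB eps_gt0 t ht; have [d d0 near] := df t ht eps eps_gt0; exists d => // s hs sd.
have [->|st] := eqVneq s t; first by rewrite !subrr cabs0 normr0 mulr0.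
have st' : (s - t)%:C%C != 0 :> C by rewrite fmorph_eq0 subr_eq0.
have -> : f s - f t = dquot f t s * (s - t)%:C%C by rewrite /dquot divfK.
rewrite cabsM cabs_real ler_wpM2r //.
have := near s hs; rewrite normr_gt0 subr_eq0 st sd => /(_ isT) nq.
have := ler_cabs_distD (dquot f t s) (g t) 0; rewrite !subr0.
by have := gB t ht; lra.
Qed.

Lemma deriv_lipschitz f g (B : R) : D f g -> (forall t, a <= t <= b -> cabs (g t) <= B) ->
  forall s t, a <= s <= b -> a <= t <= b -> cabs (f s - f t) <= B * `|s - t|.
Proof.
move=> df gB s t; wlog ts : s t / t <= s.
  move=> sym hs ht; have [ts|st] := leP t s; first exact: sym ts hs ht.
  by rewrite cabs_distC distrC; exact: sym (ltW st) ht hs.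
move=> /andP [_ sb] /andP [ta _]; rewrite ger0_norm ?subr_ge0 //.
apply/ler_addgt0Pr => e e0; have e' : 0 < e / (s - t + 1) by rewrite divr_gt0 //; lra.
apply: le_trans (lipschitz_of_local (deriv_local_lipschitz df gB e') ta ts sb) _.
rewrite mulrDl lerD2l mulrAC ler_pdivrMr; last lra.
by rewrite ler_wpM2l; lra.
Qed.

End DerivativeWithin.

(** * The Hölder spaces C^{n,alpha} *)

Section HolderSpace.
Set Implicit Arguments.
Unset Strict Implicit.
Variables (R : realType) (a b alpha : R).
Hypotheses (hab : a < b) (alpha_gt0 : 0 < alpha) (alpha_le1 : alpha <= 1).
Local Notation C := R[i].
Local Notation D := (has_deriv_on a b).
Local Notation eqon := (eqon a b).
Local Notation H n := (in_holder a b n alpha).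
Local Notation N n := (holder_norm a b n alpha).
Local Notation M := (max_der a b 0).
Local Notation Q := (holder_semi a b 0 alpha).
Local Notation quot := (holder_quot a b 0 alpha).

Let a_in : a <= a <= b. Proof. by rewrite lexx ltW. Qed.
Let b_in : a <= b <= b. Proof. by rewrite lexx ltW. Qed.

Definition holder_bound (f : R -> C) (K : R) := forall s t, a <= s <= b -> a <= t <= b ->
  cabs (f s - f t) <= K * `|s - t| `^ alpha.

Lemma holder_quot_ab f : quot f (cabs (f b - f a) / (b - a) `^ alpha).
Proof. by exists a, b; split => //; rewrite ltW. Qed.

Lemma holder_semi_ge0 f : 0 <= Q f.
Proof.
rewrite /holder_semi; have [supq|] := pselect (has_sup (quot f)); last by move/sup_out ->.
apply: le_trans (sup_upper_bound supq (holder_quot_ab f)).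
by rewrite divr_ge0 ?cabs_ge0 ?powR_ge0.
Qed.

Lemma max_der_ge0 f : 0 <= M f.
Proof.
rewrite /max_der; set S := (X in sup X).
have [supS|] := pselect (has_sup S); last by move/sup_out ->.
by apply: le_trans (sup_upper_bound supS (ex_intro2 _ _ a a_in erefl)); exact: cabs_ge0.
Qed.

Lemma max_der_le f B : (forall t, a <= t <= b -> cabs (f t) <= B) -> M f <= B.
Proof.
move=> fB; apply: ge_sup; first by exists (cabs (f a)), a.
by move=> _ [t ht ->]; exact: fB.
Qed.

Lemma cabs_le_max_der f B : (forall t, a <= t <= b -> cabs (f t) <= B) ->
  forall t, a <= t <= b -> cabs (f t) <= M f.
Proof.
move=> fB t ht; apply: (sup_upper_bound _ (ex_intro2 _ _ t ht erefl)).
by split; [exists (cabs (f a)), a | exists B => _ [s hs ->]; exact: fB].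
Qed.

Lemma holder_bound_ge0 f K : holder_bound f K -> 0 <= K.
Proof.
move=> fK; have ba : 0 < `|b - a| `^ alpha by rewrite powR_gt0 // normr_gt0 subr_eq0 gt_eqF.
by rewrite -(pmulr_lge0 _ ba) (le_trans (cabs_ge0 _) (fK b a b_in a_in)).
Qed.

Lemma holder_semi_le f K : holder_bound f K -> has_ubound (quot f) /\ Q f <= K.
Proof.
move=> fK; have ubK : ubound (quot f) K.
  move=> _ [t1 [t2 [at1 t12 t2b ->]]].
  rewrite ler_pdivrMr ?powR_gt0 ?subr_gt0 // -[t2 - t1]gtr0_norm ?subr_gt0 //.
  by apply: fK; apply/andP; split; lra.
by split; [exists K | apply: ge_sup => //; exact: (ex_intro _ _ (holder_quot_ab f))].
Qed.

Lemma holder_bound_semi f : has_ubound (quot f) -> holder_bound f (Q f).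
Proof.
move=> ubq; have supq : has_sup (quot f).
  by split => //; exact: (ex_intro _ _ (holder_quot_ab f)).
have ordered t1 t2 : a <= t1 -> t1 < t2 -> t2 <= b ->
    cabs (f t2 - f t1) <= Q f * `|t2 - t1| `^ alpha.
  move=> at1 t12 t2b; rewrite gtr0_norm ?subr_gt0 // -ler_pdivrMr ?powR_gt0 ?subr_gt0 //.
  by apply: sup_upper_bound => //; exists t1, t2.
move=> s t /andP [sa sb] /andP [ta tb]; case: (ltgtP s t) => st.
- by rewrite cabs_distC distrC; exact: ordered.
- exact: ordered.
- by rewrite st !subrr cabs0 normr0 powR0 ?mulr0 // gt_eqF.
Qed.

Lemma cabs_le_of_holder_bound f K : holder_bound f K ->
  forall t, a <= t <= b -> cabs (f t) <= cabs (f a) + K * (b - a) `^ alpha.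
Proof.
move=> fK t ht; have K0 := holder_bound_ge0 fK.
have tab : `|t - a| `^ alpha <= (b - a) `^ alpha.
  case/andP: ht => ta tb; rewrite ger0_norm ?subr_ge0 //.
  by apply: ge0_ler_powR; rewrite ?nnegrE ?(ltW alpha_gt0) //; move: hab; lra.
have := ler_cabs_distD (f t) (f a) 0; rewrite !subr0.
by have := fK t a ht a_in; have := ler_wpM2l K0 tab; lra.
Qed.

Lemma holder_bound_cont f K : holder_bound f K -> cont_on a b f.
Proof.
move=> fK t ht e e0; have K0 := holder_bound_ge0 fK.
have eK : 0 < e / (K + 1) by rewrite divr_gt0 //; lra.
exists ((e / (K + 1)) `^ alpha^-1) => [|s hs std]; first exact: powR_gt0.
have st : `|s - t| `^ alpha < e / (K + 1).
  have <- : ((e / (K + 1)) `^ alpha^-1) `^ alpha = e / (K + 1).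
    by rewrite -powRrM mulVf ?gt_eqF // powRr1 // ltW.
  by apply: gt0_ltr_powR; rewrite ?nnegrE ?powR_ge0.
by apply: le_lt_trans (fK s t hs ht) (lt_mul_of_lt_divD1 K0 (powR_ge0 _ _) st).
Qed.

Lemma in_holder0P f : H 0 f <-> cont_on a b f /\ has_ubound (quot f).
Proof.
split=> [[[_ cf] ubq] | [cf ubq]]; first by split => //; exact: (cf 0%N).
by split => //; split => // j; rewrite leqn0 => /eqP ->.
Qed.

Lemma in_holder0_of_bound f K : holder_bound f K -> H 0 f /\ Q f <= K.
Proof.
move=> fK; have [ubq QK] := holder_semi_le fK; split => //.
by apply/in_holder0P; split => //; exact: holder_bound_cont fK.
Qed.

Lemma in_holder0_bound f : H 0 f -> holder_bound f (Q f).
Proof. by case/in_holder0P => _; exact: holder_bound_semi. Qed.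

Lemma in_holder0_max_der f : H 0 f -> forall t, a <= t <= b -> cabs (f t) <= M f.
Proof. by move/in_holder0_bound/cabs_le_of_holder_bound; exact: cabs_le_max_der. Qed.

Lemma holder_norm0E f : N 0 f = M f + Q f.
Proof. by rewrite /holder_norm big_ord1. Qed.

Lemma max_derD f g : H 0 f -> H 0 g -> M (fun t => f t + g t) <= M f + M g.
Proof.
move=> f0 g0; apply: max_der_le => t ht; apply: le_trans (ler_cabsD _ _) _.
by rewrite lerD ?in_holder0_max_der.
Qed.

Lemma max_derZ (c : C) f : H 0 f -> M (fun t => c * f t) <= cabs c * M f.
Proof.
move=> f0; apply: max_der_le => t ht.
by rewrite cabsM ler_wpM2l ?cabs_ge0 ?in_holder0_max_der.
Qed.

Lemma max_derM f g : H 0 f -> H 0 g -> M (fun t => f t * g t) <= M f * M g.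
Proof.
move=> f0 g0; apply: max_der_le => t ht.
by rewrite cabsM ler_pM ?cabs_ge0 ?in_holder0_max_der.
Qed.

Lemma holder0D f g : H 0 f -> H 0 g ->
  H 0 (fun t => f t + g t) /\ N 0 (fun t => f t + g t) <= N 0 f + N 0 g.
Proof.
move=> f0 g0; have fgQ : holder_bound (fun t => f t + g t) (Q f + Q g).
  move=> s t hs ht; rewrite opprD addrACA mulrDl; apply: le_trans (ler_cabsD _ _) _.
  by rewrite lerD ?in_holder0_bound.
have [fg0 QfgQ] := in_holder0_of_bound fgQ; split => //.
by rewrite !holder_norm0E; have := max_derD f0 g0; lra.
Qed.

Lemma holder0Z (c : C) f : H 0 f ->
  H 0 (fun t => c * f t) /\ N 0 (fun t => c * f t) <= cabs c * N 0 f.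
Proof.
move=> f0; have cfQ : holder_bound (fun t => c * f t) (cabs c * Q f).
  move=> s t hs ht; rewrite -mulrBr cabsM -mulrA.
  by rewrite ler_wpM2l ?cabs_ge0 ?in_holder0_bound.
have [cf0 QcfQ] := in_holder0_of_bound cfQ; split => //.
by rewrite !holder_norm0E mulrDr; have := max_derZ c f0; lra.
Qed.

Lemma holder0M f g : H 0 f -> H 0 g ->
  H 0 (fun t => f t * g t) /\ N 0 (fun t => f t * g t) <= N 0 f * N 0 g.
Proof.
move=> f0 g0; have fgQ : holder_bound (fun t => f t * g t) (M f * Q g + M g * Q f).
  move=> s t hs ht.
  have -> : f s * g s - f t * g t = f s * (g s - g t) + g t * (f s - f t) by ring.
  apply: le_trans (ler_cabsD _ _) _; rewrite !cabsM mulrDl -!mulrA.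
  by rewrite lerD // ler_pM ?cabs_ge0 ?in_holder0_max_der ?in_holder0_bound.
have [fg0 QfgQ] := in_holder0_of_bound fgQ; split => //.
have := max_derM f0 g0; have := max_der_ge0 f; have := max_der_ge0 g.
by have := holder_semi_ge0 f; have := holder_semi_ge0 g; rewrite !holder_norm0E; nra.
Qed.

Definition lip_holder_const := (b - a) `^ (1 - alpha).

Lemma lip_holder_const_ge0 : 0 <= lip_holder_const.
Proof. exact: powR_ge0. Qed.

Lemma le_lip_holder (x : R) : 0 <= x -> x <= b - a -> x <= lip_holder_const * x `^ alpha.
Proof.
move=> x0 xba; rewrite {1}(_ : x = x `^ (1 - alpha) * x `^ alpha); last first.
  by rewrite -powRD ?subrK ?powRr1 // oner_eq0.
rewrite ler_wpM2r ?powR_ge0 //; apply: ge0_ler_powR; rewrite ?nnegrE ?subr_ge0 //.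
by move: hab; lra.
Qed.

Lemma holder0_of_deriv f g : D f g -> H 0 g ->
  H 0 f /\ N 0 f <= M f + lip_holder_const * M g.
Proof.
move=> df g0; have fK : holder_bound f (M g * lip_holder_const).
  move=> s t hs ht; apply: le_trans (deriv_lipschitz df (in_holder0_max_der g0) hs ht) _.
  rewrite -mulrA ler_wpM2l ?max_der_ge0 // le_lip_holder //.
  by case/andP: hs => ? ?; case/andP: ht => ? ?; rewrite ler_norml; apply/andP; split; lra.
have [f0 Qf] := in_holder0_of_bound fK; split => //.
by rewrite holder_norm0E mulrC lerD2l.
Qed.

Lemma dernS j f : dern a b j.+1 f = dern a b j (dw a b f).
Proof. by rewrite /dern iterSr. Qed.

Lemma holder_quotS n f : holder_quot a b n.+1 alpha f = holder_quot a b n alpha (dw a b f).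
Proof. by rewrite /holder_quot dernS. Qed.

Lemma in_holderS n f : H n.+1 f <-> [/\ D f (dw a b f), cont_on a b f & H n (dw a b f)].
Proof.
rewrite /in_holder /Cn holder_quotS; split.
  move=> [[df cf] ubq]; split; [exact: (df 0%N) | exact: (cf 0%N) |].
  by split => //; split=> j j_n; rewrite -!dernS; [exact: df | exact: cf].
move=> [df cf [[df' cf'] ubq]]; split => //; split.
  by case=> [|j] j_n //; rewrite 2!dernS; exact: df'.
by case=> [|j] j_n //; rewrite dernS; exact: cf'.
Qed.

Lemma holder_normS n f : N n.+1 f = M f + N n (dw a b f).
Proof.
rewrite /holder_norm big_ord_recl /holder_semi holder_quotS -addrA; congr (_ + (_ + _)).
by apply: eq_bigr => i _; rewrite /max_der lift0 dernS.
Qed.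

Lemma cont_on_eqon f f' : eqon f f' -> cont_on a b f -> cont_on a b f'.
Proof.
move=> ff' cf t ht e e0; have [d d0 near] := cf t ht e e0; exists d => // s hs sd.
by rewrite -!ff' //; exact: near.
Qed.

Lemma holder_quot_eqon f f' : eqon f f' -> quot f = quot f'.
Proof.
move=> ff'; apply/seteqP; split=> _ [t1 [t2 [at1 t12 t2b ->]]]; exists t1, t2;
  by split => //; rewrite /= !ff' //; apply/andP; split; lra.
Qed.

Lemma max_der_eqon f f' : eqon f f' -> M f = M f'.
Proof.
move=> ff'; rewrite /max_der; congr sup.
by apply/seteqP; split=> _ [t ht ->]; exists t; rewrite //= ff'.
Qed.

Lemma holder_eqon n f f' : eqon f f' -> (H n f <-> H n f') /\ N n f = N n f'.
Proof.
elim: n f f' => [|n IH] f f' ff'.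
  rewrite !holder_norm0E (max_der_eqon ff') /holder_semi (holder_quot_eqon ff').
  split => //; rewrite !in_holder0P (holder_quot_eqon ff').
  by split=> -[cf ubq]; split => //; apply: cont_on_eqon cf => // t ht; rewrite ff'.
have dff' := dw_eqon hab ff'; have [IHH IHN] := IH _ _ dff'.
rewrite !holder_normS IHN (max_der_eqon ff'); split => //.
rewrite !in_holderS; split=> -[df cf Hdf]; split.
- exact: deriv_eqon ff' dff' df.
- exact: cont_on_eqon ff' cf.
- by apply/IHH.
- exact: deriv_eqon (eqon_sym ff') (eqon_sym dff') df.
- exact: cont_on_eqon (eqon_sym ff') cf.
- by apply/IHH.
Qed.

Lemma holder_norm_ge0 n f : 0 <= N n f.
Proof.
elim: n f => [|n IH] f; first by rewrite holder_norm0E addr_ge0 ?max_der_ge0 ?holder_semi_ge0.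
by rewrite holder_normS addr_ge0 ?max_der_ge0.
Qed.

Lemma max_der_le_holder_norm n f : M f <= N n f.
Proof.
case: n => [|n]; first by rewrite holder_norm0E lerDl holder_semi_ge0.
by rewrite holder_normS lerDl holder_norm_ge0.
Qed.

Definition embed_const := 1 + lip_holder_const.

Lemma embed_const_ge1 : 1 <= embed_const.
Proof. by rewrite lerDl lip_holder_const_ge0. Qed.

Lemma holder_embed n f : H n.+1 f -> H n f /\ N n f <= embed_const * N n.+1 f.
Proof.
have K0 := lip_holder_const_ge0; rewrite /embed_const.
elim: n f => [|n IH] f /in_holderS [df cf Hdf].
  have [f0 Nf] := holder0_of_deriv df Hdf; split => //.
  have := max_der_le_holder_norm 0 (dw a b f); have := max_der_ge0 f.
  have := holder_norm_ge0 0 (dw a b f); rewrite holder_normS.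
  by move=> h1 h2 h3; have := ler_wpM2l K0 h3; nra.
have [Hdf' Ndf] := IH _ Hdf; have f1 : H n.+1 f by apply/in_holderS.
split => //; rewrite (holder_normS n) (holder_normS n.+1).
by have := max_der_ge0 f; have := holder_norm_ge0 n.+1 (dw a b f); nra.
Qed.

Lemma holder_embed_iter n p f : H (n + p) f ->
  H n f /\ N n f <= embed_const ^+ p * N (n + p) f.
Proof.
elim: p f => [|p IH] f; first by rewrite addn0 expr0 mul1r.
rewrite addnS => /holder_embed [/IH [Hf Nf] Np]; split => //.
rewrite (le_trans Nf) // exprSr -mulrA ler_wpM2l //.
by rewrite exprn_ge0 // (le_trans ler01 embed_const_ge1).
Qed.

Lemma in_holder_le m n f : (m <= n)%N -> H n f -> H m f.
Proof. by move/subnKC <-; case/holder_embed_iter. Qed.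

Lemma holderS_of_deriv n f g : D f g -> H n g -> H n.+1 f /\ N n.+1 f = M f + N n g.
Proof.
move=> df Hg; have [HH NN] := holder_eqon n (eqon_sym (dw_spec hab df)).
rewrite holder_normS -NN; split => //; apply/in_holderS; split.
- exact: (dw_deriv hab df).
- exact: deriv_cont df.
- by apply/HH.
Qed.

Lemma holderD n f g : H n f -> H n g ->
  H n (fun t => f t + g t) /\ N n (fun t => f t + g t) <= N n f + N n g.
Proof.
elim: n f g => [|n IH] f g; first exact: holder0D.
move=> Hf Hg; have /in_holderS [df _ Hdf] := Hf; have /in_holderS [dg _ Hdg] := Hg.
have [Hfg Nfg] := IH _ _ Hdf Hdg.
have [Hfg' ->] := holderS_of_deriv (deriv_add df dg) Hfg; split => //.
have := max_derD (in_holder_le (leq0n _) Hf) (in_holder_le (leq0n _) Hg).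
by rewrite !holder_normS; lra.
Qed.

Lemma holderZ n (c : C) f : H n f ->
  H n (fun t => c * f t) /\ N n (fun t => c * f t) <= cabs c * N n f.
Proof.
elim: n f => [|n IH] f; first exact: holder0Z.
move=> Hf; have /in_holderS [df _ Hdf] := Hf; have [Hcf Ncf] := IH _ Hdf.
have [Hcf' ->] := holderS_of_deriv (deriv_scale c df) Hcf; split => //.
by rewrite holder_normS mulrDr; have := max_derZ c (in_holder_le (leq0n _) Hf); lra.
Qed.

Lemma holder_zero n : H n (fun=> 0) /\ N n (fun=> 0) <= 0.
Proof.
have M0 : M (fun=> 0 : C) <= 0 by apply: max_der_le => t _; rewrite cabs0.
elim: n => [|n [H0 N0]].
  have Z : holder_bound (fun=> 0) 0 by move=> s t _ _; rewrite subrr cabs0 mul0r.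
  have [H0 Q0] := in_holder0_of_bound Z.
  by rewrite holder_norm0E; split => //; lra.
by have [H0' ->] := holderS_of_deriv (deriv_cst 0) H0; split => //; lra.
Qed.

Lemma holderB n f g : H n f -> H n g ->
  H n (fun t => f t - g t) /\ N n (fun t => f t - g t) <= N n f + N n g.
Proof.
move=> Hf Hg; have [Hg' Ng'] := holderZ (-1) Hg.
have [Hfg Nfg] := holderD Hf Hg'; rewrite cabsN cabs1 mul1r in Ng'.
under eq_fun do rewrite -mulN1r.
by split => //; apply: le_trans Nfg _; rewrite lerD2l.
Qed.

Lemma holder_normZ n (c : C) f : H n f -> N n (fun t => c * f t) = cabs c * N n f.
Proof.
move=> Hf; have [-> | c0] := eqVneq c 0.
  under eq_fun do rewrite mul0r; rewrite cabs0 mul0r.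
  by apply/eqP; rewrite eq_le holder_norm_ge0 andbT; exact: (holder_zero n).2.
have [Hcf Ncf] := holderZ c Hf; apply/eqP; rewrite eq_le Ncf /=.
have := (holderZ c^-1 Hcf).2; under eq_fun do rewrite mulrA mulVf // mul1r.
by rewrite cabsV -(ler_pM2l (cabs_gt0 c0)) mulrA mulfV ?mul1r // gt_eqF ?cabs_gt0.
Qed.

Lemma holder_sum n (I : Type) (s : seq I) (P : pred I) (F : I -> R -> C) :
  (forall i, P i -> H n (F i)) ->
  H n (fun t => \sum_(i <- s | P i) F i t) /\
  N n (fun t => \sum_(i <- s | P i) F i t) <= \sum_(i <- s | P i) N n (F i).
Proof.
move=> HF; elim: s => [|i s [Hs Ns]].
  by under eq_fun do rewrite big_nil; rewrite big_nil; exact: holder_zero.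
under eq_fun do rewrite big_cons; rewrite big_cons; case Pi: (P i); last by split.
have [HFs NFs] := holderD (HF i Pi) Hs.
by split => //; rewrite (le_trans NFs) // lerD2l.
Qed.

(* The recursion comes from the Leibniz rule (fg)' = f'g + fg' combined with
   holder_embed. *)
Fixpoint holderM_const (n : nat) : R :=
  if n is n'.+1 then 1 + 2 * holderM_const n' * embed_const else 1.

Lemma holderM_const_ge0 n : 0 <= holderM_const n.
Proof.
elim: n => [|n IH] /=; first exact: ler01.
by rewrite addr_ge0 // !mulr_ge0 // (le_trans ler01 embed_const_ge1).
Qed.

Lemma holderM n f g : H n f -> H n g ->
  H n (fun t => f t * g t) /\
  N n (fun t => f t * g t) <= holderM_const n * N n f * N n g.
Proof.
elim: n f g => [|n IH] f g; first by rewrite /= mul1r; exact: holder0M.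
move=> Hf Hg; have /in_holderS [df _ Hdf] := Hf; have /in_holderS [dg _ Hdg] := Hg.
have [Hfn Nfn] := holder_embed Hf; have [Hgn Ngn] := holder_embed Hg.
have [H1 N1] := IH _ _ Hdf Hgn; have [H2 N2] := IH _ _ Hfn Hdg.
have [H12 N12] := holderD H1 H2.
have [Hfg ->] := holderS_of_deriv (deriv_mul df dg) H12; split => //=.
have Mfg := max_derM (in_holder_le (leq0n _) Hf) (in_holder_le (leq0n _) Hg).
set c := holderM_const n; set K := embed_const.
set Nf := N n.+1 f; set Ng := N n.+1 g.
have [Mf0 Mg0] := (max_der_ge0 f, max_der_ge0 g).
have Mf : M f <= Nf by exact: max_der_le_holder_norm.
have Mg : M g <= Ng by exact: max_der_le_holder_norm.
have Ndf : N n (dw a b f) <= Nf by rewrite /Nf holder_normS lerDr.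
have Ndg : N n (dw a b g) <= Ng by rewrite /Ng holder_normS lerDr.
have c0 : 0 <= c := holderM_const_ge0 n.
have b0 : M f * M g <= Nf * Ng by rewrite ler_pM.
have b1 : c * (N n (dw a b f) * N n g) <= c * (Nf * (K * Ng)).
  by rewrite ler_wpM2l // ler_pM ?holder_norm_ge0.
have b2 : c * (N n f * N n (dw a b g)) <= c * ((K * Nf) * Ng).
  by rewrite ler_wpM2l // ler_pM ?holder_norm_ge0.
rewrite -/c in N1 N2; rewrite !mulrA in N1 N2 b1 b2; lra.
Qed.

Lemma dern_eqon k f g : eqon f g -> eqon (dern a b k f) (dern a b k g).
Proof. by elim: k f g => [|k IH] f g fg //; rewrite !dernS; exact: IH (dw_eqon hab fg). Qed.

Lemma holder_dern n k f : H (n + k) f -> H n (dern a b k f) /\ N n (dern a b k f) <= N (n + k) f.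
Proof.
elim: k f => [|k IH] f; first by rewrite addn0.
rewrite addnS => /in_holderS [_ _ /IH [Hk Nk]]; rewrite dernS; split => //.
by rewrite holder_normS (le_trans Nk) // lerDr max_der_ge0.
Qed.

Lemma dernZ k (c : C) f : H k f ->
  eqon (dern a b k (fun t => c * f t)) (fun t => c * dern a b k f t).
Proof.
elim: k f => [|k IH] f // /in_holderS [df _ Hdf]; rewrite !dernS.
exact: eqon_trans (dern_eqon k (dw_spec hab (deriv_scale c df))) (IH _ Hdf).
Qed.

Lemma dern_zero k : eqon (dern a b k (fun=> 0)) (fun=> 0).
Proof.
elim: k => [|k IH] //; rewrite dernS.
exact: eqon_trans (dern_eqon k (dw_spec hab (deriv_cst 0))) IH.
Qed.

Definition pow_fact (q : nat) (t : R) : C := (t - a)%:C%C ^+ q / q`!%:R.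

Lemma pow_fact0 : pow_fact 0 = fun=> 1.
Proof. by apply: funext => t; rewrite /pow_fact expr0 fact0 divr1. Qed.

Lemma deriv_pow_shift q :
  D (fun t => (t - a)%:C%C ^+ q.+1) (fun t => q.+1%:R * (t - a)%:C%C ^+ q).
Proof.
elim: q => [|q IH].
  by apply: deriv_eqon (deriv_shift a) => t _; rewrite ?expr1 ?expr0 ?mulr1.
apply: deriv_eqon (deriv_mul (deriv_shift a) IH) => t _; first by rewrite -exprS.
by rewrite mul1r mulrCA -exprS [q.+2%:R]mulrSr mulrDl mul1r addrC.
Qed.

Lemma deriv_pow_fact q : D (pow_fact q.+1) (pow_fact q).
Proof.
apply: deriv_eqon (deriv_scale (q.+1`!%:R)^-1 (deriv_pow_shift q)) => t _.
  by rewrite /pow_fact mulrC.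
have qf : q`!%:R != 0 :> C by rewrite pnatr_eq0 -lt0n fact_gt0.
by rewrite /pow_fact factS natrM; field; rewrite qf addrC natr1 pnatr_eq0.
Qed.

Lemma dern_pow_fact k p :
  eqon (dern a b k (pow_fact p)) (if (k <= p)%N then pow_fact (p - k) else fun=> 0).
Proof.
elim: k => [|k IH]; first by rewrite subn0.
rewrite /dern iterS -/(dern a b k _); apply: eqon_trans (dw_eqon hab IH) _.
case: (ltngtP k p) => [kp | pk | ->].
- rewrite subnS -(prednK (_ : 0 < p - k)%N) ?subn_gt0 //.
  exact: (dw_spec hab (deriv_pow_fact _)).
- exact: (dw_spec hab (deriv_cst 0)).
- by rewrite subnn pow_fact0; exact: (dw_spec hab (deriv_cst 1)).
Qed.

Lemma in_holder_pow_fact n q : H n (pow_fact q).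
Proof.
apply: (in_holder_le (leqnSn n)); elim: q n => [|q IH] n.
  by rewrite pow_fact0; exact: (holderS_of_deriv (deriv_cst 1) (holder_zero n).1).1.
exact: (holderS_of_deriv (deriv_pow_fact q) (in_holder_le (leqnSn n) (IH n))).1.
Qed.

Section VectorFunctions.
Variable m : nat.
Local Notation vH n := (vin_holder a b n alpha).
Local Notation vN n := (vholder_norm a b n alpha).
Implicit Types (y : R -> 'cV[C]_m) (B : R -> 'M[C]_m).

Definition vcomp y (i : 'I_m) : R -> C := fun t => y t i 0.

Lemma vholder_norm_ge0 n y : 0 <= vN n y.
Proof. by apply: sumr_ge0 => i _; exact: holder_norm_ge0. Qed.

Lemma mholder_norm_ge0 n B : 0 <= mholder_norm a b n alpha B.
Proof. by do 2![apply: sumr_ge0 => ? _]; exact: holder_norm_ge0. Qed.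

Lemma holder_norm_le_vholder_norm n y i : N n (vcomp y i) <= vN n y.
Proof.
rewrite /vholder_norm (bigD1 i) //= lerDl.
by apply: sumr_ge0 => j _; exact: holder_norm_ge0.
Qed.

Lemma vholder_zero n : vH n (fun=> 0 : 'cV[C]_m) /\ vN n (fun=> 0 : 'cV[C]_m) = 0.
Proof.
have comp0 (i : 'I_m) : (fun t : R => (0 : 'cV[C]_m) i 0) = fun=> 0.
  by apply: funext => t; rewrite mxE.
split=> [i|]; first by have := (holder_zero n).1; rewrite -(comp0 i).
rewrite /vholder_norm big1 // => i _; apply/eqP.
by rewrite eq_le holder_norm_ge0 andbT comp0 (holder_zero n).2.
Qed.

Lemma vholder_normZ n (c : C) y : vH n y ->
  vH n (fun t => c *: y t) /\ vN n (fun t => c *: y t) = cabs c * vN n y.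
Proof.
move=> Hy; have compZ (i : 'I_m) : (fun t => (c *: y t) i 0) = fun t => c * vcomp y i t.
  by apply: funext => t; rewrite /vcomp mxE.
split=> [i|]; first by rewrite compZ; exact: (holderZ c (Hy i)).1.
rewrite /vholder_norm mulr_sumr; apply: eq_bigr => i _.
by rewrite compZ holder_normZ //; exact: Hy.
Qed.

Lemma vholder_sum n (I : Type) (s : seq I) (Y : I -> R -> 'cV[C]_m) :
  (forall k, vH n (Y k)) ->
  vH n (fun t => \sum_(k <- s) Y k t) /\
  vN n (fun t => \sum_(k <- s) Y k t) <= \sum_(k <- s) vN n (Y k).
Proof.
move=> HY; have compS (i : 'I_m) : (fun t => (\sum_(k <- s) Y k t) i 0) =
    fun t => \sum_(k <- s) vcomp (Y k) i t.
  by apply: funext => t; rewrite /vcomp summxE.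
have HS i := holder_sum (P := xpredT) s (fun k _ => HY k i).
split=> [i|]; first by rewrite compS; exact: (HS i).1.
rewrite /vholder_norm exchange_big /=; apply: ler_sum => i _.
by rewrite compS; exact: (HS i).2.
Qed.

Lemma vholder_mx_mul n B y : min_holder a b n alpha B -> vH n y ->
  vH n (fun t => B t *m y t) /\
  vN n (fun t => B t *m y t) <= holderM_const n * mholder_norm a b n alpha B * vN n y.
Proof.
move=> HB Hy; have compM (i : 'I_m) : (fun t => (B t *m y t) i 0) =
    fun t => \sum_(l < m) B t i l * vcomp y l t.
  by apply: funext => t; rewrite /vcomp mxE.
have HM i l := holderM (HB i l) (Hy l).
have HS i := holder_sum (P := xpredT) (index_enum 'I_m) (fun l _ => (HM i l).1).
split=> [i|]; first by rewrite compM; exact: (HS i).1.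
rewrite -mulrA /mholder_norm mulr_suml mulr_sumr; apply: ler_sum => i _.
rewrite compM mulr_suml mulr_sumr; apply: le_trans (HS i).2 _.
apply: ler_sum => l _; apply: le_trans (HM i l).2 _; rewrite -mulrA.
rewrite ler_wpM2l ?holderM_const_ge0 // ler_wpM2l ?holder_norm_ge0 //.
exact: holder_norm_le_vholder_norm.
Qed.

Lemma vholder_vder n p k y : (k <= p)%N -> vH (n + p) y ->
  vH n (vder a b k y) /\ vN n (vder a b k y) <= embed_const ^+ p * vN (n + p) y.
Proof.
move=> kp Hy; have K1 := embed_const_ge1.
have compD (i : 'I_m) : (fun t => vder a b k y t i 0) = dern a b k (vcomp y i).
  by apply: funext => t; rewrite /vcomp mxE.
have HD i : H n (dern a b k (vcomp y i)) /\
    N n (dern a b k (vcomp y i)) <= embed_const ^+ p * N (n + p) (vcomp y i).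
  have := Hy i; rewrite -/(vcomp y i) (_ : n + p = n + k + (p - k))%N; last first.
    by rewrite -addnA subnKC.
  move=> /holder_embed_iter [/holder_dern [Hk Nk] Nkp]; split => //.
  rewrite (le_trans Nk) // (le_trans Nkp) // ler_wpM2r ?holder_norm_ge0 //.
  by rewrite ler_weXn2l // leq_subr.
split=> [i|]; first by rewrite compD; exact: (HD i).1.
rewrite /vholder_norm mulr_sumr; apply: ler_sum => i _.
by rewrite compD; exact: (HD i).2.
Qed.

(** * The perturbed operator L(eps) - L(0) *)

Section Perturbation.
Variables (r n : nat) (eps0 : R) (A : R -> 'I_r -> R -> 'M[C]_m).
Hypotheses (eps0_gt0 : 0 < eps0)
  (HA : forall eps, 0 <= eps -> eps < eps0 -> forall k, min_holder a b n alpha (A eps k)).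

Definition coef_diff eps k t := A eps k t - A 0 k t.

Definition op_diff eps y t := Lop a b (A eps) y t - Lop a b (A 0) y t.

Definition coef_norm eps := \sum_(k < r) mholder_norm a b n alpha (coef_diff eps k).

Definition op_const := holderM_const n * embed_const ^+ r.

Lemma op_const_ge0 : 0 <= op_const.
Proof. by rewrite mulr_ge0 ?holderM_const_ge0 ?exprn_ge0 ?(le_trans ler01 embed_const_ge1). Qed.

Lemma coef_norm_ge0 eps : 0 <= coef_norm eps.
Proof. by apply: sumr_ge0 => k _; exact: mholder_norm_ge0. Qed.

Lemma op_diffE eps y : op_diff eps y = fun t => \sum_(k < r) coef_diff eps k t *m vder a b k y t.
Proof.
apply: funext => t; rewrite /op_diff /Lop opprD addrACA subrr add0r -sumrB.
by apply: eq_bigr => k _; rewrite mulmxBl.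
Qed.

Lemma min_holder_coef_diff eps k : 0 <= eps -> eps < eps0 ->
  min_holder a b n alpha (coef_diff eps k).
Proof.
move=> eps_ge0 eps_lt0 i j.
have := (holderB (HA eps_ge0 eps_lt0 k i j) (HA (lexx 0) eps0_gt0 k i j)).1.
by congr in_holder; apply: funext => t; rewrite !mxE.
Qed.

Lemma op_diff_holder eps y : 0 <= eps -> eps < eps0 -> vH (n + r) y ->
  vH n (op_diff eps y) /\ vN n (op_diff eps y) <= op_const * coef_norm eps * vN (n + r) y.
Proof.
move=> eps_ge0 eps_lt0 Hy; rewrite op_diffE.
have HT k := vholder_mx_mul (min_holder_coef_diff k eps_ge0 eps_lt0)
  (vholder_vder (ltnW (ltn_ord k)) Hy).1.
have [HS NS] := vholder_sum (index_enum 'I_r) (fun k => (HT k).1); split => //.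
apply: le_trans NS _; rewrite /coef_norm -mulrA mulr_suml mulr_sumr; apply: ler_sum => k _.
apply: le_trans (HT k).2 _; rewrite /op_const -!mulrA ler_wpM2l ?holderM_const_ge0 //.
rewrite mulrCA ler_wpM2l ?mholder_norm_ge0 //.
exact: (vholder_vder (ltnW (ltn_ord k)) Hy).2.
Qed.

Definition op_values (T : (R -> 'cV[C]_m) -> R -> 'cV[C]_m) :=
  [set q | exists y, [/\ vH (n + r) y, vN (n + r) y <= 1 & q = vN n (T y)]]%classic.

Lemma opnormE T : opnorm a b n r alpha T = sup (op_values T).
Proof. by []. Qed.

Lemma op_values_ubound eps : 0 <= eps -> eps < eps0 ->
  ubound (op_values (op_diff eps)) (op_const * coef_norm eps).
Proof.
move=> eps_ge0 eps_lt0 _ [y [Hy y1 ->]].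
apply: le_trans (op_diff_holder eps_ge0 eps_lt0 Hy).2 _.
by rewrite -[X in _ <= X]mulr1 ler_wpM2l // mulr_ge0 ?op_const_ge0 ?coef_norm_ge0.
Qed.

Lemma opnorm_op_diff_le eps : 0 <= eps -> eps < eps0 ->
  opnorm a b n r alpha (op_diff eps) <= op_const * coef_norm eps.
Proof.
move=> eps_ge0 eps_lt0; rewrite opnormE; apply: ge_sup; last exact: op_values_ubound.
have [H0 N0] := vholder_zero (n + r).
by exists (vN n (op_diff eps (fun=> 0))), (fun=> 0); split; rewrite ?N0.
Qed.

Lemma op_diffZ eps (c : C) y : vH (n + r) y -> forall i,
  eqon (vcomp (op_diff eps (fun t => c *: y t)) i) (fun t => c * vcomp (op_diff eps y) i t).
Proof.
move=> Hy i t ht; rewrite !op_diffE /vcomp !summxE mulr_sumr; apply: eq_bigr => k _.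
rewrite !mxE mulr_sumr; apply: eq_bigr => l _; rewrite !mxE mulrCA; congr (_ * _).
have Hyl : H k (vcomp y l) by apply: in_holder_le (Hy l); rewrite ltnW // ltn_addl.
by rewrite -(dernZ c Hyl ht); congr dern; apply: funext => s; rewrite mxE.
Qed.

Lemma vholder_norm_op_diff_le eps y : 0 <= eps -> eps < eps0 -> vH (n + r) y ->
  vN n (op_diff eps y) <= (1 + vN (n + r) y) * opnorm a b n r alpha (op_diff eps).
Proof.
move=> eps_ge0 eps_lt0 Hy; set V := vN (n + r) y.
have V1 : 0 < 1 + V by rewrite ltr_wpDr ?vholder_norm_ge0.
pose c := (1 + V)^-1; have c0 : 0 < c by rewrite invr_gt0.
have [Hcy Ncy] := vholder_normZ c%:C%C Hy.
have cy1 : vN (n + r) (fun t => c%:C%C *: y t) <= 1.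
  by rewrite Ncy -/V cabs_real gtr0_norm // /c mulrC ler_pdivrMr // mul1r lerDr.
have Tcy : vN n (op_diff eps (fun t => c%:C%C *: y t)) = c * vN n (op_diff eps y).
  rewrite /vholder_norm mulr_sumr; apply: eq_bigr => i _.
  rewrite (holder_eqon n (op_diffZ eps c%:C%C Hy i)).2 holder_normZ ?cabs_real ?gtr0_norm //.
  exact: (op_diff_holder eps_ge0 eps_lt0 Hy).1.
have : c * vN n (op_diff eps y) <= opnorm a b n r alpha (op_diff eps).
  rewrite -Tcy opnormE; apply: ub_le_sup.
    by exists (op_const * coef_norm eps); exact: op_values_ubound.
  by exists (fun t => c%:C%C *: y t).
by move=> cX; rewrite -(ler_pM2l c0) mulrA /c mulVf ?gt_eqF // mul1r.
Qed.

Definition test_vec (p : nat) (j : 'I_m) (t : R) : 'cV[C]_m :=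
  \col_l (if l == j then pow_fact p t else 0).

Lemma vcomp_test_vec p j l :
  (fun t => test_vec p j t l 0) = if l == j then pow_fact p else fun=> 0.
Proof. by apply: funext => t; rewrite mxE; case: (l == j). Qed.

Lemma vin_holder_test_vec q p j : vH q (test_vec p j).
Proof.
move=> l; rewrite vcomp_test_vec; case: (l == j).
  exact: in_holder_pow_fact.
exact: (holder_zero q).1.
Qed.

Lemma op_diff_test_vec eps (p : 'I_r) j i : eqon (vcomp (op_diff eps (test_vec p j)) i)
  (fun t => coef_diff eps p t i j +
     \sum_(k < r | (k < p)%N) coef_diff eps k t i j * dern a b k (pow_fact p) t).
Proof.
move=> t ht; rewrite op_diffE /vcomp summxE.
have entry k : (coef_diff eps k t *m vder a b k (test_vec p j) t) i 0 =
    coef_diff eps k t i j * dern a b k (pow_fact p) t.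
  rewrite mxE (bigD1 j) //= big1 ?addr0 => [|l lj]; rewrite /vder mxE vcomp_test_vec ?eqxx //.
  by rewrite (negbTE lj) dern_zero // mulr0.
rewrite (eq_bigr _ (fun k _ => entry k)) (bigD1 p) //= (dern_pow_fact p p ht) leqnn subnn.
rewrite pow_fact0 mulr1 big_mkcond [in RHS]big_mkcond; congr (_ + _); apply: eq_bigr => k _.
case: ltngtP => [kp | pk | /val_inj ->]; rewrite ?eqxx //.
  by rewrite -val_eqE /= (ltn_eqF kp).
by rewrite -val_eqE /= (gtn_eqF pk) (dern_pow_fact k p ht) leqNgt pk mulr0.
Qed.

Lemma coef_diff_entry_le eps (p : 'I_r) i j : 0 <= eps -> eps < eps0 ->
  N n (fun t => coef_diff eps p t i j) <= vN n (op_diff eps (test_vec p j)) +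
    \sum_(k < r | (k < p)%N) holderM_const n * N n (dern a b k (pow_fact p)) *
                              N n (fun t => coef_diff eps k t i j).
Proof.
move=> eps_ge0 eps_lt0.
have HX := (op_diff_holder eps_ge0 eps_lt0 (vin_holder_test_vec (n + r) p j)).1 i.
have HM k := holderM (min_holder_coef_diff k eps_ge0 eps_lt0 i j)
  (holder_dern (in_holder_pow_fact (n + k) p)).1.
have [HG NG] := holder_sum (P := fun k : 'I_r => (k < p)%N) (index_enum 'I_r)
  (fun k _ => (HM k).1).
have XG : eqon (fun t => coef_diff eps p t i j) (fun t =>
    vcomp (op_diff eps (test_vec p j)) i t -
    \sum_(k < r | (k < p)%N) coef_diff eps k t i j * dern a b k (pow_fact p) t).
  by move=> t ht; rewrite (op_diff_test_vec eps p j i ht) addrK.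
rewrite (holder_eqon n XG).2; apply: le_trans (holderB HX HG).2 _.
rewrite lerD ?holder_norm_le_vholder_norm //; apply: le_trans NG _.
by apply: ler_sum => k _; rewrite mulrAC; exact: (HM k).2.
Qed.

Lemma vanishes_opnorm_op_diff :
  (forall k, vanishes eps0 (fun eps => mholder_norm a b n alpha (coef_diff eps k))) ->
  vanishes eps0 (fun eps => opnorm a b n r alpha (op_diff eps)).
Proof.
move=> vA; apply: vanishes_le (vanishesZ op_const_ge0 (vanishes_sum (P := xpredT)
  (index_enum 'I_r) (fun k _ => vA k))) _.
by move=> eps eps_gt0 eps_lt0; exact: opnorm_op_diff_le (ltW eps_gt0) eps_lt0.
Qed.

Lemma vanishes_op_diff_of_opnorm :
  vanishes eps0 (fun eps => opnorm a b n r alpha (op_diff eps)) ->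
  forall y, vH (n + r) y -> vanishes eps0 (fun eps => vN n (op_diff eps y)).
Proof.
move=> vT y Hy.
have V1 : 0 <= 1 + vN (n + r) y by rewrite addr_ge0 ?ler01 ?vholder_norm_ge0.
apply: vanishes_le (vanishesZ V1 vT) _.
by move=> eps eps_gt0 eps_lt0; exact: vholder_norm_op_diff_le (ltW eps_gt0) eps_lt0 Hy.
Qed.

Lemma vanishes_coef_diff_of_op_diff :
  (forall y, vH (n + r) y -> vanishes eps0 (fun eps => vN n (op_diff eps y))) ->
  forall k, vanishes eps0 (fun eps => mholder_norm a b n alpha (coef_diff eps k)).
Proof.
move=> vTy.
(* By op_diff_test_vec, the test vector test_vec p j isolates the entries of
   coef_diff eps p up to terms in the coef_diff eps k with k < p. *)
suff entry q (p : 'I_r) : (p < q)%N -> forall i j,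
    vanishes eps0 (fun eps => N n (fun t => coef_diff eps p t i j)).
  move=> k; apply: vanishes_sum => i _; apply: vanishes_sum => j _.
  exact: entry _ _ (ltnSn k) i j.
elim: q p => [//|q IH] p; rewrite ltnS leq_eqVlt => /predU1P [pq | /IH //] i j.
apply: vanishes_le (fun eps eps_gt0 eps_lt0 =>
  coef_diff_entry_le p i j (ltW eps_gt0) eps_lt0).
apply: vanishesD; first exact: vTy _ (vin_holder_test_vec _ p j).
apply: vanishes_sum => k kp; apply: vanishesZ.
  by rewrite mulr_ge0 ?holderM_const_ge0 ?holder_norm_ge0.
by apply: IH; rewrite -pq.
Qed.

End Perturbation.

End VectorFunctions.

End HolderSpace.

Theorem theorem2 (R : realType) (a b : R) (m r n : nat) (alpha eps0 : R)
  (A : R -> 'I_r -> R -> 'M[R[i]]_m) :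
  a < b -> (1 <= m)%N -> (2 <= r)%N -> 0 < alpha -> alpha <= 1 -> 0 < eps0 ->
  (forall eps, 0 <= eps -> eps < eps0 ->
     forall k : 'I_r, min_holder a b n alpha (A eps k)) ->
  let L := fun eps y => Lop a b (A eps) y in
  (* (I) *)
  ((forall k : 'I_r, forall e : R, 0 < e -> exists2 d : R, 0 < d &
      forall eps, 0 < eps -> eps < d -> eps < eps0 ->
        mholder_norm a b n alpha (fun t => A eps k t - A 0 k t) < e)
   <->
  (* (c1) *)
   (forall e : R, 0 < e -> exists2 d : R, 0 < d &
      forall eps, 0 < eps -> eps < d -> eps < eps0 ->
        opnorm a b n r alpha (fun y t => L eps y t - L 0 y t) < e))
  /\
  ((forall k : 'I_r, forall e : R, 0 < e -> exists2 d : R, 0 < d &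
      forall eps, 0 < eps -> eps < d -> eps < eps0 ->
        mholder_norm a b n alpha (fun t => A eps k t - A 0 k t) < e)
   <->
  (* (c2) *)
   (forall y : R -> 'cV[R[i]]_m, vin_holder a b (n + r) alpha y ->
    forall e : R, 0 < e -> exists2 d : R, 0 < d &
      forall eps, 0 < eps -> eps < d -> eps < eps0 ->
        vholder_norm a b n alpha (fun t => L eps y t - L 0 y t) < e)).
Proof.
move=> hab _ _ alpha_gt0 alpha_le1 eps0_gt0 HA L.
have c1_of_I := vanishes_opnorm_op_diff hab alpha_gt0 alpha_le1 eps0_gt0 HA.
have c2_of_c1 := vanishes_op_diff_of_opnorm hab alpha_gt0 alpha_le1 eps0_gt0 HA.
have I_of_c2 := vanishes_coef_diff_of_op_diff hab alpha_gt0 alpha_le1 eps0_gt0 HA.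
by split; split => [vA | vT]; [exact: c1_of_I | exact: I_of_c2 (c2_of_c1 vT)
  | exact: c2_of_c1 (c1_of_I vA) | exact: I_of_c2].
Qed.
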